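(* Suppose that $2$ is invertible in $T$. Then for every sequence ${\mathbf s}$ in $\widehat{\mathcal S}$, $${\mathcal Y}_T({\mathbf s})=\Big\{(z_\sigma)\in\bigoplus_{\sigma\in I({\mathbf s})}Q_T\ \Big|\ \textstyle\sum_\sigma z_\sigma m_\sigma\in S_T\text{ for all }(m_\sigma)\in{\mathcal X}_T({\mathbf s})\Big\}.$$ Consequently ${\mathcal Y}_T({\mathbf s})$ is identified with the graded dual $\bigoplus_n\operatorname{Hom}_{S_T}({\mathcal X}_T({\mathbf s}),S_T\{n\})$ via the pairing $((x_\sigma),(y_\sigma))\mapsto\sum_\sigma x_\sigma y_\sigma$.
   Context: $R$ irreducible reduced finite root system (positive roots $R^+$, simple roots $\Pi$, highest root $\gamma$); $\widehat X=X\oplus\mathbb Z$, $\delta=(0,-1)$, affine roots $\widehat R=\{\alpha+n\delta\}$. $\widehat{\mathcal W}$ generated by $s_{\alpha,n}(v,m)=(v-(\langle\alpha,v\rangle-mn)\alpha^\vee,m)$, acting contragrediently on $\widehat X$; $\widehat{\mathcal S}=\{s_{\alpha,0}:\alpha\in\Pi\}\cup\{s_{\gamma,1}\}$ with simple affine roots $\alpha$ resp. $-\gamma+\delta$. $T$: commutative unital domain, affine roots nonzero in $\widehat X\otimes T$; $S_T$ symmetric algebra of $\widehat X\otimes T$ graded in even degrees, $M\{n\}_k=M_{n+k}$; $Q_T=S_T[2^{-1}][\alpha^{-1}:\alpha\in\widehat R]$. For ${\mathbf s}=(s_1,\dots,s_l)$: $I({\mathbf s})$ = strictly increasing tuples in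 $\{1,\dots,l\}$, $\operatorname{ev}(i_1,\dots,i_n)=s_{i_1}\cdots s_{i_n}$; ${\mathbf s}'=(s_1,\dots,s_{l-1})$, $I({\mathbf s})=I({\mathbf s}')\sqcup I({\mathbf s}')s_l$; $\Delta(z)_\gamma=\Delta(z)_{\gamma s_l}=z_\gamma$; $c^\lambda$ multiplies the $\sigma$-component by $\operatorname{ev}(\sigma)(\lambda)\otimes1$; $\alpha_l$ the simple affine root of $s_l$. ${\mathcal X}_T(\emptyset)=S_T$, ${\mathcal X}_T({\mathbf s})=\Delta({\mathcal X}_T({\mathbf s}'))+c^{\alpha_l}\Delta({\mathcal X}_T({\mathbf s}'))\subset\bigoplus_{I({\mathbf s})}S_T$; ${\mathcal Y}_T(\emptyset)=S_T\subset Q_T$, ${\mathcal Y}_T({\mathbf s})=\Delta({\mathcal Y}_T({\mathbf s}'))+(c^{\alpha_l})^{-1}\Delta({\mathcal Y}_T({\mathbf s}'))\subset\bigoplus_{I({\mathbf s})}Q_T$. *)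

From HB Require Import structures.
From mathcomp Require Import all_boot all_order all_algebra.
From mathcomp Require Import fraction mpoly.

Set Implicit Arguments.
Unset Strict Implicit.
Unset Printing Implicit Defensive.

Import GRing.Theory.
Local Open Scope ring_scope.

(* Finite root data.  The lattice X is Z^r (a chosen basis, X = 'rV[int]_r)
   and its dual X^\vee is identified with Z^r via the standard pairing.   *)
Section RootData.
Variable r : nat.
Local Notation X := 'rV[int]_r.

Definition pairing (mu v : X) : int := \sum_(i < r) mu 0 i * v 0 i.

Definition is_root_datum (R : seq X) (cor : X -> X) : Prop :=
  [/\ uniq R, {in R &, injective cor},
      {in R, forall a, pairing a (cor a) = 2},
      {in R &, forall a b, b - pairing b (cor a) *: a \in R} &
      {in R &, forall a b, cor b - pairing a (cor b) *: cor a \in map cor R}].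

Definition is_reduced (R : seq X) : Prop :=
  {in R &, forall a b, forall m n : int,
      m != 0 -> m *: a = n *: b -> b = a \/ b = - a}.

Definition is_irreducible (R : seq X) (cor : X -> X) : Prop :=
  R != [::] /\
  forall P : pred X, has P R -> has (predC P) R ->
    exists a b, [/\ a \in R, b \in R, P a, ~~ P b &
                   (pairing a (cor b) != 0) || (pairing b (cor a) != 0)].

Definition lincomb (Pi : seq X) (c : 'I_(size Pi) -> int) : X :=
  \sum_(i < size Pi) c i *: Pi`_i.
Arguments lincomb : clear implicits.

Definition is_base (R Pi : seq X) : Prop :=
  [/\ uniq Pi, {subset Pi <= R},
      (forall c, lincomb Pi c = 0 -> forall i, c i = 0) &
      {in R, forall b, exists c, b = lincomb Pi c /\
              ((forall i, 0 <= c i) \/ (forall i, c i <= 0))}].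

Definition is_pos_root (R Pi : seq X) (b : X) : Prop :=
  b \in R /\ exists c, b = lincomb Pi c /\ forall i, 0 <= c i.

Definition is_highest_root (R Pi : seq X) (g : X) : Prop :=
  is_pos_root R Pi g /\
  forall b, is_pos_root R Pi b ->
    exists c, g - b = lincomb Pi c /\ forall i, 0 <= c i.

(* Affine part.  Xh = X (+) Z ; delta = (0,-1), so alpha + n delta = (alpha,-n). *)
Definition Xh := (X * int)%type.

(* contragredient action on Xh of s_{alpha,n}
   ( s_{alpha,n}(v,m) = (v - (<alpha,v> - m n) alpha^vee, m) on X^vee (+) Z ),
   for the pairing <(mu,k),(v,m)> = <mu,v> - k m :
     s_{alpha,n}(mu,k) = (mu - <mu,alpha^vee> alpha, k - n <mu,alpha^vee>). *)
Definition sref (al alv : X) (n : int) (x : Xh) : Xh :=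
  (x.1 - pairing x.1 alv *: al, x.2 - n * pairing x.1 alv).

(* The simple affine reflections \hat S are labelled by option 'I_(size Pi):
   Some i  <-> s_{Pi_i, 0}   (simple affine root Pi_i = (Pi_i, 0)),
   None    <-> s_{gamma, 1}  (simple affine root -gamma + delta = (-gamma,-1)). *)
Definition lab_act (cor : X -> X) (Pi : seq X) (g : X)
    (t : option 'I_(size Pi)) : Xh -> Xh :=
  match t with
  | Some i => sref Pi`_i (cor Pi`_i) 0
  | None => sref g (cor g) 1
  end.

Definition lab_root (Pi : seq X) (g : X) (t : option 'I_(size Pi)) : Xh :=
  match t with
  | Some i => (Pi`_i, 0)
  | None => (- g, -1)
  end.

(* S_T = Sym(Xh (x) T) = T[x_0,...,x_r]  (x_i, i<r, from the basis of X,
   x_r from the Z summand); Q_T is realised inside the fraction field of S_T. *)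
Variable T : idomainType.
Local Notation ST := {mpoly T[r.+1]}.
Local Notation FT := {fraction ST}.

(* lambda (x) 1 in S_T (of degree 2 for the even grading) *)
Definition embX (x : Xh) : ST :=
  \sum_(i < r) 'X_(widen_ord (leqnSn r) i) *~ x.1 0 i + 'X_(ord_max) *~ x.2.

Definition inS (q : FT) : Prop := exists p : ST, q = tofrac p.

(* affine roots: alpha + n delta = (alpha, -n), alpha in R, n in Z *)
Definition is_aff_root (R : seq X) (x : Xh) : bool := x.1 \in R.

(* Q_T = S_T[2^-1][alpha^-1 : alpha affine root]  (as a subring of Frac S_T) *)
Definition inQ (R : seq X) (q : FT) : Prop :=
  exists (k : nat) (L : seq Xh),
    all (is_aff_root R) L /\
    inS (tofrac (2%:R ^+ k * \prod_(x <- L) embX x) * q).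

(* elements of (+)_{sigma in I(s)} FT ; I(s) for s of length l is encoded as
   {set 'I_l} (strictly increasing tuples = subsets of positions) *)
Definition Md (l : nat) := {ffun {set 'I_l} -> FT}.

Definition restr (l : nat) (sg : {set 'I_l.+1}) : {set 'I_l} :=
  [set i : 'I_l | widen_ord (leqnSn l) i \in sg].

Section Seq.
Variable L : Type.
Variable act : L -> Xh -> Xh.
Variable root : L -> Xh.
Variable s : nat -> L.          (* s_1, s_2, ... (0-based: s 0 = s_1) *)

(* ev(sigma) applied to lambda; ev(gamma s_l) = ev(gamma) s_l *)
Fixpoint evw (l : nat) : {set 'I_l} -> Xh -> Xh :=
  match l return {set 'I_l} -> Xh -> Xh with
  | 0 => fun _ x => x
  | l'.+1 => fun sg x =>
      if ord_max \in sg then evw (restr sg) (act (s l') x)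
      else evw (restr sg) x
  end.

Definition Delta (l : nat) (z : Md l) : Md l.+1 := [ffun sg => z (restr sg)].

Definition cmul (l : nat) (lam : Xh) (z : Md l) : Md l :=
  [ffun sg => tofrac (embX (evw sg lam)) * z sg].
Definition cinv (l : nat) (lam : Xh) (z : Md l) : Md l :=
  [ffun sg => (tofrac (embX (evw sg lam)))^-1 * z sg].

Fixpoint Xmod (l : nat) : Md l -> Prop :=
  match l return Md l -> Prop with
  | 0 => fun z => forall sg, inS (z sg)
  | l'.+1 => fun z => exists x x' : Md l',
      [/\ Xmod x, Xmod x' &
          z = Delta x + cmul (root (s l')) (Delta x')]
  end.

Fixpoint Ymod (l : nat) : Md l -> Prop :=
  match l return Md l -> Prop with
  | 0 => fun z => forall sg, inS (z sg)
  | l'.+1 => fun z => exists y y' : Md l',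
      [/\ Ymod y, Ymod y' &
          z = Delta y + cinv (root (s l')) (Delta y')]
  end.
End Seq.

Definition pairF (l : nat) (y m : Md l) : FT := \sum_sg y sg * m sg.

(* grading: S_T lives in even degrees, Xh (x) T in degree 2 *)
Definition homS (k : int) (p : ST) : bool :=
  match k with
  | Posz k' => if odd k' then p == 0 else p \is (k'./2).-homog
  | Negz _ => p == 0
  end.
Definition homF (k : int) (q : FT) : Prop := exists p, q = tofrac p /\ homS k p.

Definition scaleM (l : nat) (p : ST) (m : Md l) : Md l :=
  [ffun sg => tofrac p * m sg].

(* phi is an element of Hom_{S_T}(M, S_T{n}) (graded, degree preserving),
   where M is a graded S_T-submodule of (+)_{I(s)} S_T given by predicate M *)
Definition is_graded_hom (l : nat) (M : Md l -> Prop) (n : int)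
    (phi : Md l -> FT) : Prop :=
  [/\ forall m m', M m -> M m' -> phi (m + m') = phi m + phi m',
      forall p m, M m -> phi (scaleM p m) = tofrac p * phi m,
      forall m, M m -> inS (phi m) &
      forall (k : int) m, M m -> (forall sg, homF k (m sg)) ->
        homF (k + n) (phi m)].

Definition in_graded_dual (l : nat) (M : Md l -> Prop) (phi : Md l -> FT) : Prop :=
  exists (N : nat) (deg : 'I_N -> int) (phis : 'I_N -> Md l -> FT),
    (forall j, is_graded_hom M (deg j) (phis j)) /\
    forall m, M m -> phi m = \sum_j phis j m.

End RootData.

Definition XT (r : nat) (T : idomainType) (cor : 'rV[int]_r -> 'rV[int]_r)
    (Pi : seq 'rV[int]_r) (g : 'rV[int]_r) (s : seq (option 'I_(size Pi))) :
    Md r T (size s) -> Prop :=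
  @Xmod r T _ (@lab_act r cor Pi g) (@lab_root r Pi g) (nth None s) (size s).

Definition YT (r : nat) (T : idomainType) (cor : 'rV[int]_r -> 'rV[int]_r)
    (Pi : seq 'rV[int]_r) (g : 'rV[int]_r) (s : seq (option 'I_(size Pi))) :
    Md r T (size s) -> Prop :=
  @Ymod r T _ (@lab_act r cor Pi g) (@lab_root r Pi g) (nth None s) (size s).

Arguments XT {r} T cor Pi g s _.
Arguments YT {r} T cor Pi g s _.

From HB Require Import structures.
From mathcomp Require Import all_boot all_order all_algebra.
From mathcomp Require Import fraction mpoly.
From mathcomp Require Import ring.
Import GRing.Theory.
Local Open Scope ring_scope.
Set Implicit Arguments.
Unset Strict Implicit.
Unset Printing Implicit Defensive.

(* Write [y] in the sum over [I(s_1, ..., s_(l+1))] through its pairs of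
   components [y_t], [y_(t s_(l+1))], and let [e_t = ev(t)(alpha_(l+1))].  Since
   [s_(l+1)] negates [alpha_(l+1)], the pairing of [y] with [Delta x + c Delta x']
   equals [2 (<u, x> + <v, x'>)] with [u = (y_t + y_(t s))/2] and
   [v = e_t (y_t - y_(t s))/2]; and [y = Delta u + c^-1 Delta v] is exactly this
   decomposition.  As 2 is invertible, [y] pairs [X_T(s)] into [S_T] iff [u] and
   [v] pair [X_T(s')] into [S_T], which gives the description of [Y_T(s)] by
   induction on the length of [s].  The same identity shows that the pairing is
   nondegenerate and that every [S_T]-linear form on [X_T(s)] with values in [S_T]
   is a pairing with some element of [Y_T(s)]; as [c] raises degrees by 2, an
   element of [Y_T(s)] splits into pieces that shift degrees, which identifies
   [Y_T(s)] with the graded dual. *)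

Section Halving.
Variables (F : fieldType) (two_neq0 : 2 != 0 :> F).

Lemma half_add_sub (a c : F) : 2^-1 * ((a + c) + (a - c)) = a.
Proof. by field. Qed.

Lemma half_add_subr (a c : F) : 2^-1 * ((a + c) - (a - c)) = c.
Proof. by field. Qed.

Lemma half_addD (p q : F) : 2^-1 * (p + q) + 2^-1 * (p - q) = p.
Proof. by field. Qed.

Lemma half_addB (p q : F) : 2^-1 * (p + q) - 2^-1 * (p - q) = q.
Proof. by field. Qed.

End Halving.

(* In the encoding of [I(s)] by subsets of positions, [lift_set false t] and
   [lift_set true t] are the tuples [t] and [t s_(l+1)] of [I(s_1, ..., s_(l+1))]. *)
Definition lift_set (l : nat) (b : bool) (t : {set 'I_l}) : {set 'I_l.+1} :=
  [set i | if unlift ord_max i is Some j then j \in t else b].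

Section LiftSet.
Variable l : nat.

Lemma widen_ord_max (i : 'I_l) : widen_ord (leqnSn l) i = lift ord_max i.
Proof. by apply: val_inj; rewrite /= /bump leqNgt ltn_ord. Qed.

Lemma restr_lift_set b (t : {set 'I_l}) : restr (lift_set b t) = t.
Proof. by apply/setP => i; rewrite !inE widen_ord_max liftK. Qed.

Lemma ord_max_lift_set b (t : {set 'I_l}) : (ord_max \in lift_set b t) = b.
Proof. by rewrite inE unlift_none. Qed.

Lemma lift_set_restr (sg : {set 'I_l.+1}) : lift_set (ord_max \in sg) (restr sg) = sg.
Proof.
apply/setP => i; rewrite inE.
by case: unliftP => [j ->|->] //; rewrite inE widen_ord_max.
Qed.

Lemma lift_set_ind (P : {set 'I_l.+1} -> Prop) :
  (forall b t, P (lift_set b t)) -> forall sg, P sg.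
Proof. by move=> hP sg; rewrite -[sg]lift_set_restr. Qed.

Lemma big_lift_set (V : zmodType) (F : {set 'I_l.+1} -> V) :
  \sum_sg F sg = \sum_(t : {set 'I_l}) (F (lift_set false t) + F (lift_set true t)).
Proof.
rewrite (eq_bigr (fun t => \sum_(b : bool) F (lift_set b t))); last first.
  by move=> t _; rewrite big_bool addrC.
rewrite pair_big /= (reindex (fun p : {set 'I_l} * bool => lift_set p.2 p.1)) //.
exists (fun sg => (restr sg, ord_max \in sg)) => [[t b] _|sg _] /=.
  by rewrite restr_lift_set ord_max_lift_set.
by rewrite lift_set_restr.
Qed.

End LiftSet.

Lemma set_ord0 (sg : {set 'I_0}) : sg = set0.
Proof. by apply/setP => -[]. Qed.

Lemma big_set_ord0 (V : zmodType) (F : {set 'I_0} -> V) : \sum_sg F sg = F set0.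
Proof. by rewrite (big_pred1 set0) // => sg; rewrite /= (set_ord0 sg) eqxx. Qed.

Section Polynomials.
Variables (r : nat) (T : idomainType).
Local Notation ST := {mpoly T[r.+1]}.
Local Notation FT := {fraction ST}.

Lemma inS_tofrac (p : ST) : inS (tofrac p).
Proof. by exists p. Qed.

Lemma inS0 : inS (0 : FT).
Proof. by exists 0; rewrite tofrac0. Qed.

Lemma inS1 : inS (1 : FT).
Proof. by exists 1; rewrite tofrac1. Qed.

Lemma inSD (a b : FT) : inS a -> inS b -> inS (a + b).
Proof. by move=> [p ->] [q ->]; exists (p + q); rewrite tofracD. Qed.

Lemma inSN (a : FT) : inS a -> inS (- a).
Proof. by move=> [p ->]; exists (- p); rewrite tofracN. Qed.

Lemma inSM (a b : FT) : inS a -> inS b -> inS (a * b).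
Proof. by move=> [p ->] [q ->]; exists (p * q); rewrite tofracM. Qed.

Lemma inS_sum (I : Type) (s : seq I) (P : pred I) (F : I -> FT) :
  (forall i, P i -> inS (F i)) -> inS (\sum_(i <- s | P i) F i).
Proof. by move=> h; apply: big_ind => //; [exact: inS0 | exact: inSD]. Qed.

Lemma embX_opp (x : Xh r) : embX T (- x) = - embX T x.
Proof.
rewrite /embX opprD -sumrN /= mulrNz; congr (_ + _).
by apply: eq_bigr => i _; rewrite mxE mulrNz.
Qed.

Lemma embX_homog (x : Xh r) : embX T x \is 1.-homog.
Proof.
rewrite /embX; apply: rpredD; first apply: rpred_sum => i _.
  by rewrite -scaler_int; apply: rpredZ; rewrite dhomogX; apply/eqP/mdeg1.
by apply: rpredMz; rewrite dhomogX; apply/eqP/mdeg1.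
Qed.

Section Rational.
Variable R : seq 'rV[int]_r.

Lemma inQ_inS (a : FT) : inS a -> inQ R a.
Proof.
move=> ha; exists 0%N, [::]; split => //.
by rewrite big_nil expr0 mulr1 tofrac1 mul1r.
Qed.

Lemma inQD (a b : FT) : inQ R a -> inQ R b -> inQ R (a + b).
Proof.
move=> [k1 [L1 [h1 s1]]] [k2 [L2 [h2 s2]]].
exists (k1 + k2)%N, (L1 ++ L2); split; first by rewrite all_cat h1 h2.
set d1 := tofrac _ in s1; set d2 := tofrac _ in s2.
have -> : tofrac (2%:R ^+ (k1 + k2) * \prod_(x <- L1 ++ L2) embX T x) * (a + b)
    = d2 * (d1 * a) + d1 * (d2 * b).
  by rewrite exprD big_cat /= !tofracM /d1 /d2 !tofracM; ring.
by apply: inSD; apply: inSM => //; apply: inS_tofrac.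
Qed.

Lemma inQ_mulS (a b : FT) : inS a -> inQ R b -> inQ R (a * b).
Proof.
move=> ha [k [L [h sb]]]; exists k, L; split => //.
by rewrite mulrCA; apply: inSM.
Qed.

Lemma inQN (a : FT) : inQ R a -> inQ R (- a).
Proof. by rewrite -mulN1r; apply/inQ_mulS/inSN/inS1. Qed.

Lemma inQ_divl_embX (x : Xh r) (b : FT) : is_aff_root R x -> inQ R b ->
  inQ R ((tofrac (embX T x))^-1 * b).
Proof.
have [->|hx0] := eqVneq (embX T x) 0.
  by rewrite tofrac0 invr0 mul0r => _ _; apply/inQ_inS/inS0.
move=> hx [k [L [h sb]]]; exists k, (x :: L); split; first by rewrite /= hx.
have hx0' : tofrac (embX T x) != 0 by rewrite tofrac_eq0.
rewrite big_cons !tofracM.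
have -> : forall A C : FT, A * (tofrac (embX T x) * C) * ((tofrac (embX T x))^-1 * b)
    = A * C * b.
  by move=> A C; rewrite -!mulrA; congr (_ * _); rewrite mulrCA !mulrA mulfK.
by rewrite -tofracM.
Qed.

End Rational.

Lemma homS0 k : homS k (0 : ST).
Proof. by case: k => [k'|k'] //=; case: ifP => _ //; exact: rpred0. Qed.

Lemma homSD k (p q : ST) : homS k p -> homS k q -> homS k (p + q).
Proof.
case: k => [k'|k'] /=; last by move=> /eqP -> /eqP ->; rewrite addr0.
by case: ifP => _; [move=> /eqP -> /eqP ->; rewrite addr0 | exact: rpredD].
Qed.

Lemma homSC k (c : T) (p : ST) : homS k p -> homS k (c%:MP * p).
Proof.
rewrite mul_mpolyC; case: k => [k'|k'] /=; last by move=> /eqP ->; rewrite scaler0.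
by case: ifP => _; [move=> /eqP ->; rewrite scaler0 | exact: rpredZ].
Qed.

Lemma homSM (d : nat) k (e p : ST) : e \is d.-homog -> homS k p ->
  homS (k + Posz d.*2) (e * p).
Proof.
move=> he; case: k => [k'|k'] /=; last by move=> /eqP ->; rewrite mulr0 homS0.
case: ifP => ho.
  by move=> /eqP ->; rewrite mulr0; case: ifP => // _; apply: rpred0.
move=> hp; rewrite oddD odd_double ho /= halfD odd_double andbF add0n.
by rewrite half_double addnC; apply: dhomogM.
Qed.

Lemma pihomogS_mul (e q : ST) j : e \is 1.-homog ->
  pihomog mdeg j.+1 (e * q) = e * pihomog mdeg j q.
Proof.
move=> he; set k := maxn (msize q) j.+1.
have hjk : (j < k)%N by rewrite leq_maxr.
rewrite {1}(pihomog_partitionE (k := k) (mf := mdeg) (p := q)) ?leq_maxl //.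
rewrite mulr_sumr raddf_sum /= (bigD1 (Ordinal hjk)) //= big1 ?addr0.
  by rewrite pihomog_dE //; have := dhomogM he (pihomogP mdeg j q); rewrite add1n.
move=> i hi; apply: (@pihomog_ne0 _ _ _ (1 + i)%N).
  by rewrite add1n eqSS; apply: contra hi => /eqP hij; apply/eqP/val_inj.
by apply: dhomogM => //; apply: pihomogP.
Qed.

Lemma pihomog0_mul (e q : ST) : e \is 1.-homog -> pihomog mdeg 0 (e * q) = 0.
Proof.
move=> he; rewrite (pihomog_partitionE (k := msize q) (mf := mdeg) (p := q)) //.
rewrite mulr_sumr raddf_sum /= big1 // => i _.
by apply: (@pihomog_ne0 _ _ _ (1 + i)%N) => //; apply: dhomogM => //; apply: pihomogP.
Qed.

Lemma homS_mulKl (e p : ST) k : e \is 1.-homog -> e != 0 ->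
  homS k (e * p) -> homS (k - 2) p.
Proof.
move=> he hne.
have homS_ep0 k' : e * p = 0 -> homS k' p.
  by move=> /eqP; rewrite mulf_eq0 (negbTE hne) /= => /eqP ->; apply: homS0.
case: k => [k'|k']; last by move=> /eqP /homS_ep0.
rewrite {1}/homS; case: ifP => ho; first by move=> /eqP /homS_ep0.
have hk' : k' = (k'./2).*2 by rewrite -{1}(odd_double_half k') ho.
case e2: (k'./2) => [|j] hp.
  by apply: homS_ep0; rewrite -(pihomog_dE hp) pihomog0_mul.
have pe : p = pihomog mdeg j p.
  by apply: (mulfI hne); rewrite -pihomogS_mul //; exact/esym/pihomog_dE.
rewrite hk' e2 doubleS -addn2 PoszD addrK /= odd_double half_double pe.
exact: pihomogP.
Qed.

Lemma homF0 k : homF k (0 : FT).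
Proof. by exists 0; rewrite tofrac0 homS0. Qed.

Lemma homFD k (a b : FT) : homF k a -> homF k b -> homF k (a + b).
Proof. by move=> [p [-> hp]] [q [-> hq]]; exists (p + q); rewrite tofracD homSD. Qed.

Lemma homFC k (c : T) (a : FT) : homF k a -> homF k (tofrac c%:MP * a).
Proof. by move=> [p [-> hp]]; exists (c%:MP * p); rewrite tofracM homSC. Qed.

Lemma homFN k (a : FT) : homF k a -> homF k (- a).
Proof.
have -> : - a = tofrac (-1 : T)%:MP * a by rewrite mpolyCN tofracN mpolyC1 tofrac1 mulN1r.
exact: homFC.
Qed.

Lemma homF2 k (a : FT) : homF k a -> homF k (2 * a).
Proof. by move=> ha; rewrite mulr_natl mulr2n; apply: homFD. Qed.

Section TwoUnit.
Hypothesis two_unit : (2%:R : T) \is a GRing.unit.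

Lemma two_tofrac : (2 : FT) = tofrac (2%:R : T)%:MP.
Proof. by rewrite mpolyC_nat rmorph_nat. Qed.

Lemma two_neq0 : (2 : FT) != 0.
Proof.
rewrite two_tofrac tofrac_eq0 mpolyC_eq0.
by apply: contraTneq two_unit => ->; rewrite unitr0.
Qed.

Lemma half_tofrac : (2^-1 : FT) = tofrac ((2%:R : T)^-1)%:MP.
Proof.
apply: (mulfI two_neq0).
by rewrite divff ?two_neq0 // two_tofrac -tofracM -mpolyCM divrr // tofrac1.
Qed.

Lemma inS_half : inS (2^-1 : FT).
Proof. by rewrite half_tofrac; apply: inS_tofrac. Qed.

Lemma homF_half k (a : FT) : homF k a -> homF k (2^-1 * a).
Proof. by rewrite half_tofrac; apply: homFC. Qed.

End TwoUnit.
End Polynomials.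

Section Pairing.
Variables (r : nat) (T : idomainType) (l : nat).
Local Notation M := (Md r T l).

Lemma pairF0l (m : M) : pairF 0 m = 0.
Proof. by rewrite /pairF big1 // => sg _; rewrite ffunE mul0r. Qed.

Lemma pairF0r (y : M) : pairF y 0 = 0.
Proof. by rewrite /pairF big1 // => sg _; rewrite ffunE mulr0. Qed.

Lemma pairFDl (y y' m : M) : pairF (y + y') m = pairF y m + pairF y' m.
Proof. by rewrite /pairF -big_split; apply: eq_bigr => sg _; rewrite ffunE mulrDl. Qed.

Lemma pairFBl (y y' m : M) : pairF (y - y') m = pairF y m - pairF y' m.
Proof. by rewrite /pairF -sumrB; apply: eq_bigr => sg _; rewrite !ffunE mulrBl. Qed.

Lemma pairFDr (y m m' : M) : pairF y (m + m') = pairF y m + pairF y m'.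
Proof. by rewrite /pairF -big_split; apply: eq_bigr => sg _; rewrite ffunE mulrDr. Qed.

Lemma pairF_scaleM (y m : M) p : pairF y (scaleM p m) = tofrac p * pairF y m.
Proof. by rewrite /pairF mulr_sumr; apply: eq_bigr => sg _; rewrite ffunE mulrCA. Qed.

Lemma pairF_suml (I : Type) (s : seq I) (F : I -> M) (m : M) :
  pairF (\sum_(i <- s) F i) m = \sum_(i <- s) pairF (F i) m.
Proof. exact: (big_morph (fun y => pairF y m) (fun y y' => pairFDl y y' m) (pairF0l m)). Qed.

End Pairing.

Section Duality.
Variables (r : nat) (T : idomainType) (R : seq 'rV[int]_r).
Variables (L : Type) (act : L -> Xh r -> Xh r) (root : L -> Xh r) (s : nat -> L).
Hypothesis act_opp : forall t x, act t (- x) = - act t x.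
Hypothesis act_root : forall t, act t (root t) = - root t.
Hypothesis act_aff : forall t x, is_aff_root R x -> is_aff_root R (act t x).
Hypothesis root_aff : forall t, is_aff_root R (root t).
Hypothesis embX_neq0 : forall x, is_aff_root R x -> embX T x != 0.
Hypothesis two_unit : (2%:R : T) \is a GRing.unit.

Local Notation FT := {fraction {mpoly T[r.+1]}}.
Local Notation M l := (Md r T l).
Local Notation XM l := (@Xmod r T L act root s l).
Local Notation YM l := (@Ymod r T L act root s l).

Lemma evw_opp l (sg : {set 'I_l}) x : evw act s sg (- x) = - evw act s sg x.
Proof. by elim: l sg x => [|l IH] sg x //=; case: ifP => _; rewrite ?act_opp IH. Qed.

Lemma evw_aff l (sg : {set 'I_l}) x :
  is_aff_root R x -> is_aff_root R (evw act s sg x).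
Proof. by elim: l sg x => [|l IH] sg x //= hx; case: ifP => _; rewrite IH ?act_aff. Qed.

Definition ev_root l (t : {set 'I_l}) : FT :=
  tofrac (embX T (evw act s t (root (s l)))).

Lemma ev_root_neq0 l (t : {set 'I_l}) : ev_root t != 0.
Proof. by rewrite tofrac_eq0 embX_neq0 ?evw_aff. Qed.

Definition Xcons l (x x' : M l) : M l.+1 :=
  Delta x + cmul act s (root (s l)) (Delta x').

Definition Ycons l (u v : M l) : M l.+1 :=
  Delta u + cinv act s (root (s l)) (Delta v).

(* Since [s_(l+1)] maps its simple root to its negative, the weight at
   [t s_(l+1)] is minus the weight at [t]. *)
Lemma ev_root_lift_set l b (t : {set 'I_l}) :
  tofrac (embX T (evw act s (lift_set b t) (root (s l)))) = (-1) ^+ b * ev_root t.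
Proof.
rewrite /= ord_max_lift_set restr_lift_set.
by case: b; rewrite ?mul1r // act_root evw_opp embX_opp tofracN mulN1r.
Qed.

Lemma Xcons_lift_set l (x x' : M l) b t :
  Xcons x x' (lift_set b t) = x t + (-1) ^+ b * ev_root t * x' t.
Proof. by rewrite !ffunE ev_root_lift_set !restr_lift_set. Qed.

Lemma Ycons_lift_set l (u v : M l) b t :
  Ycons u v (lift_set b t) = u t + (-1) ^+ b * (ev_root t)^-1 * v t.
Proof.
rewrite !ffunE ev_root_lift_set !restr_lift_set.
by case: b; rewrite ?mul1r // !mulN1r invrN.
Qed.

Let two_neq0F : (2 : FT) != 0 := two_neq0 r two_unit.

Definition Yavg l (y : M l.+1) : M l :=
  [ffun t => 2^-1 * (y (lift_set false t) + y (lift_set true t))].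

Definition Ydiff l (y : M l.+1) : M l :=
  [ffun t => 2^-1 * (ev_root t * (y (lift_set false t) - y (lift_set true t)))].

Lemma pairF_Xcons l (y : M l.+1) (x x' : M l) :
  pairF y (Xcons x x') = 2 * (pairF (Yavg y) x + pairF (Ydiff y) x').
Proof.
rewrite /pairF big_lift_set mulrDr !mulr_sumr -big_split; apply: eq_bigr => t _.
rewrite !Xcons_lift_set !ffunE /= expr0 expr1 !mul1r !mulN1r.
move: (ev_root t) (y _) (y _) (x t) (x' t) => e y0 y1 a b.
by field.
Qed.

Lemma Yavg_Ycons l (u v : M l) : Yavg (Ycons u v) = u.
Proof.
apply/ffunP => t; rewrite ffunE !Ycons_lift_set /= expr0 expr1 mul1r mulN1r mulNr.
exact: half_add_sub.
Qed.

Lemma Ydiff_Ycons l (u v : M l) : Ydiff (Ycons u v) = v.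
Proof.
apply/ffunP => t; rewrite ffunE !Ycons_lift_set /= expr0 expr1 mul1r mulN1r mulNr.
by rewrite mulrCA half_add_subr // mulVKf ?ev_root_neq0.
Qed.

Lemma Ycons_split l (y : M l.+1) : Ycons (Yavg y) (Ydiff y) = y.
Proof.
apply/ffunP; apply: lift_set_ind => b t; rewrite Ycons_lift_set !ffunE.
rewrite -mulrA [(ev_root t)^-1 * _]mulrCA mulKf ?ev_root_neq0 //.
by case: b; rewrite /= ?expr0 ?expr1 ?mul1r ?mulN1r ?mulNr ?half_addD ?half_addB.
Qed.

Lemma Ycons0 l : Ycons 0 0 = 0 :> M l.+1.
Proof. by apply/ffunP => sg; rewrite !ffunE mulr0 addr0. Qed.

Lemma YconsD l (u v u' v' : M l) : Ycons u v + Ycons u' v' = Ycons (u + u') (v + v').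
Proof. by apply/ffunP => sg; rewrite !ffunE mulrDr addrACA. Qed.

Lemma XconsD l (x x' y y' : M l) : Xcons x x' + Xcons y y' = Xcons (x + y) (x' + y').
Proof. by apply/ffunP => sg; rewrite !ffunE mulrDr addrACA. Qed.

Lemma XconsZ l p (x x' : M l) : Xcons (scaleM p x) (scaleM p x') = scaleM p (Xcons x x').
Proof. by apply/ffunP => sg; rewrite !ffunE mulrDr mulrCA. Qed.

Lemma scaleM0 l p : scaleM p 0 = 0 :> M l.
Proof. by apply/ffunP => sg; rewrite !ffunE mulr0. Qed.

Lemma pairF_Ycons_Xcons l (u v x x' : M l) :
  pairF (Ycons u v) (Xcons x x') = 2 * (pairF u x + pairF v x').
Proof. by rewrite pairF_Xcons Yavg_Ycons Ydiff_Ycons. Qed.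

Lemma pairF_Yavg l (y : M l.+1) x : pairF (Yavg y) x = 2^-1 * pairF y (Xcons x 0).
Proof. by rewrite pairF_Xcons pairF0r addr0 mulKf. Qed.

Lemma pairF_Ydiff l (y : M l.+1) x : pairF (Ydiff y) x = 2^-1 * pairF y (Xcons 0 x).
Proof. by rewrite pairF_Xcons pairF0r add0r mulKf. Qed.

Lemma Xmod0 l : XM l 0.
Proof.
elim: l => [|l IH] /=; first by move=> sg; rewrite ffunE; exact: inS0.
by exists 0, 0; split => //; apply/ffunP => sg; rewrite !ffunE mulr0 addr0.
Qed.

Lemma Xmod_Xcons l (x x' : M l) : XM l x -> XM l x' -> XM l.+1 (Xcons x x').
Proof. by move=> hx hx'; exists x, x'. Qed.

Lemma Xmod1 : XM 0 [ffun => 1].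
Proof. by move=> sg; rewrite ffunE; exact: inS1. Qed.

Lemma Xmod_inS l m : XM l m -> forall sg, inS (m sg).
Proof.
elim: l m => [|l IH] m //= [x [x' [hx hx' ->]]].
apply: lift_set_ind => b t; rewrite -/(Xcons x x') Xcons_lift_set.
apply: inSD; first exact: IH.
apply: inSM; last exact: IH.
by case: b; rewrite /= ?expr0 ?expr1 ?mul1r ?mulN1r; [apply: inSN|]; apply: inS_tofrac.
Qed.

Lemma Ymod_succ l (y : M l.+1) : YM l.+1 y <-> YM l (Yavg y) /\ YM l (Ydiff y).
Proof.
split => [[u [v [hu hv ->]]]|[hu hv]].
  by rewrite -/(Ycons u v) Yavg_Ycons Ydiff_Ycons.
by exists (Yavg y), (Ydiff y); rewrite -/(Ycons _ _) Ycons_split.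
Qed.

Lemma Ycons_inQ l (u v : M l) : (forall t, inQ R (u t)) -> (forall t, inQ R (v t)) ->
  forall sg, inQ R (Ycons u v sg).
Proof.
move=> hu hv; apply: lift_set_ind => b t; rewrite Ycons_lift_set -mulrA.
apply: inQD => //.
by case: b; rewrite /= ?expr0 ?expr1 ?mul1r ?mulN1r ?mulNr; [apply: inQN|];
  apply: inQ_divl_embX => //; apply/evw_aff.
Qed.

Lemma Ymod_dual l (y : M l) :
  YM l y <-> (forall sg, inQ R (y sg)) /\ (forall m, XM l m -> inS (pairF y m)).
Proof.
elim: l y => [|l IH] y.
  split => [hy|[_ hy] sg].
    split=> [sg|m hm]; first exact: inQ_inS.
    by apply: inS_sum => sg _; apply: inSM.
  by have := hy _ Xmod1; rewrite /pairF big_set_ord0 (set_ord0 sg) ffunE mulr1.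
rewrite Ymod_succ !IH; split.
  move=> [[hu hux] [hv hvx]]; split; first by rewrite -[y]Ycons_split; apply: Ycons_inQ.
  move=> _ [x [x' [hx hx' ->]]]; rewrite -/(Xcons x x') pairF_Xcons.
  by apply/inSM/inSD; [rewrite two_tofrac; apply: inS_tofrac | apply: hux | apply: hvx].
move=> [hy hyx]; split; split.
- move=> t; rewrite ffunE; apply: inQ_mulS; first exact: inS_half.
  exact: inQD.
- move=> x hx; rewrite pairF_Yavg; apply: inSM; first exact: inS_half.
  by apply/hyx/Xmod_Xcons/Xmod0.
- move=> t; rewrite ffunE; apply: inQ_mulS; first exact: inS_half.
  apply: inQ_mulS; first exact: inS_tofrac.
  by apply: inQD; last apply: inQN.
- move=> x hx; rewrite pairF_Ydiff; apply: inSM; first exact: inS_half.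
  by apply/hyx/Xmod_Xcons/hx/Xmod0.
Qed.

Lemma pairF_nondegenerate l (y : M l) : (forall m, XM l m -> pairF y m = 0) -> y = 0.
Proof.
elim: l y => [|l IH] y hy.
  apply/ffunP => sg; rewrite (set_ord0 sg) ffunE.
  by have := hy _ Xmod1; rewrite /pairF big_set_ord0 ffunE mulr1.
have hu : Yavg y = 0.
  by apply: IH => x hx; rewrite pairF_Yavg hy ?mulr0 //; apply/Xmod_Xcons/Xmod0.
have hv : Ydiff y = 0.
  by apply: IH => x hx; rewrite pairF_Ydiff hy ?mulr0 //; apply/Xmod_Xcons/hx/Xmod0.
by rewrite -[y]Ycons_split hu hv Ycons0.
Qed.

Definition S_linear l (f : M l -> FT) : Prop :=
  [/\ forall m m', XM l m -> XM l m' -> f (m + m') = f m + f m',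
      forall p m, XM l m -> f (scaleM p m) = tofrac p * f m &
      forall m, XM l m -> inS (f m)].

Lemma S_linear_comp l (f : M l.+1 -> FT) (F : M l -> M l.+1) c :
  S_linear f -> inS c -> (forall x, XM l x -> XM l.+1 (F x)) ->
  {morph F : x x' / x + x'} -> (forall p x, F (scaleM p x) = scaleM p (F x)) ->
  S_linear (fun x => c * f (F x)).
Proof.
move=> [fD fZ fS] hc XF FD FZ; split=> [x x' hx hx'|p x hx|x hx].
- by rewrite FD fD ?mulrDr //; apply: XF.
- by rewrite FZ fZ 1?mulrCA //; apply: XF.
- by apply: inSM => //; apply/fS/XF.
Qed.

Lemma S_linear_pairF l (f : M l -> FT) :
  S_linear f -> exists y, YM l y /\ forall m, XM l m -> f m = pairF y m.
Proof.
elim: l f => [|l IH] f hf; have [fD fZ fS] := hf.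
  exists [ffun => f [ffun => 1]]; split=> [sg|m hm]; first by rewrite ffunE; apply/fS/Xmod1.
  have [p hp] := Xmod_inS hm set0.
  have -> : m = scaleM p [ffun => 1].
    by apply/ffunP => sg; rewrite !ffunE mulr1 (set_ord0 sg).
  rewrite fZ; last exact: Xmod1.
  by rewrite /pairF big_set_ord0 !ffunE mulr1 mulrC.
have [u [hu fu]] : exists u, YM l u /\ forall x, XM l x -> 2^-1 * f (Xcons x 0) = pairF u x.
  apply/IH/S_linear_comp => //; first exact: inS_half.
  - by move=> x hx; apply/Xmod_Xcons/Xmod0.
  - by move=> x x'; rewrite XconsD addr0.
  - by move=> p x; rewrite -XconsZ scaleM0.
have [v [hv fv]] : exists v, YM l v /\ forall x, XM l x -> 2^-1 * f (Xcons 0 x) = pairF v x.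
  apply/IH/S_linear_comp => //; first exact: inS_half.
  - by move=> x hx; apply/Xmod_Xcons/hx/Xmod0.
  - by move=> x x'; rewrite XconsD addr0.
  - by move=> p x; rewrite -XconsZ scaleM0.
exists (Ycons u v); split; first by exists u, v.
move=> _ [x [x' [hx hx' ->]]]; rewrite -/(Xcons x x') pairF_Ycons_Xcons -fu // -fv //.
rewrite -mulrDr mulVKf // -fD ?XconsD ?addr0 ?add0r //;
  by apply: Xmod_Xcons => //; apply: Xmod0.
Qed.

Definition shifts_degree l (n : int) (y : M l) : Prop :=
  forall (k : int) m, XM l m -> (forall sg, homF k (m sg)) -> homF (k + n) (pairF y m).

Lemma shifts_degree0 l n : shifts_degree n (0 : M l).
Proof. by move=> k m _ _; rewrite pairF0l; apply: homF0. Qed.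

Lemma Xcons_homog l k (x x' : M l) : XM l x' -> (forall sg, homF k (Xcons x x' sg)) ->
  forall t, homF k (x t) /\ homF (k - 2) (x' t).
Proof.
move=> hx' hk t.
have [p ep] := Xmod_inS hx' t.
have := hk (lift_set false t); have := hk (lift_set true t).
rewrite !Xcons_lift_set /= expr0 expr1 mul1r mulN1r mulNr ep => hx1 hx0.
split.
  rewrite -[x t](half_add_sub two_neq0F _ (ev_root t * tofrac p)).
  by apply: (homF_half two_unit); apply: homFD.
have : homF k (ev_root t * tofrac p).
  rewrite -[_ * _](half_add_subr two_neq0F (x t)).
  by apply: (homF_half two_unit); apply: homFD hx0 (homFN hx1).
move=> [q [/esym/eqP]]; rewrite /ev_root -tofracM tofrac_eq => /eqP -> hq.
exists p; split => //; apply: homS_mulKl hq; first exact: embX_homog.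
by rewrite embX_neq0 ?evw_aff.
Qed.

Lemma shifts_degree_Ycons l n (u v : M l) :
  shifts_degree n u -> shifts_degree (n + 2) v -> shifts_degree n (Ycons u v).
Proof.
move=> hu hv k _ [x [x' [hx hx' ->]]] hk.
rewrite -/(Xcons x x') pairF_Ycons_Xcons; apply/homF2/homFD.
  by apply: hu => // t; have [] := Xcons_homog hx' hk t.
rewrite -[k + n](addr0 _) -(addNr 2) addrACA.
by apply: hv => // t; have [] := Xcons_homog hx' hk t.
Qed.

Lemma Ymod0 l : YM l 0.
Proof.
apply/Ymod_dual; split=> [sg|m _]; rewrite ?pairF0l ?ffunE.
  exact/inQ_inS/inS0.
exact: inS0.
Qed.

Lemma YmodD l (y y' : M l) : YM l y -> YM l y' -> YM l (y + y').
Proof.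
move=> /Ymod_dual[hy hyx] /Ymod_dual[hy' hyx']; apply/Ymod_dual; split=> [sg|m hm].
  by rewrite ffunE; apply: inQD.
by rewrite pairFDl; apply: inSD; [apply: hyx | apply: hyx'].
Qed.

Lemma Ymod_sum l (I : Type) (s0 : seq I) (F : I -> M l) :
  (forall i, YM l (F i)) -> YM l (\sum_(i <- s0) F i).
Proof. by move=> hF; apply: big_ind => //; [exact: Ymod0 | exact: YmodD]. Qed.

Lemma Ymod_homog_decomposition l (y : M l) : YM l y ->
  exists zs : seq (int * M l),
    (forall z, z \in zs -> YM l z.2 /\ shifts_degree z.1 z.2) /\ y = \sum_(z <- zs) z.2.
Proof.
elim: l y => [|l IH] y.
  move=> hy; have [p hp] := hy set0.
  exists [seq (Posz d.*2, [ffun => tofrac (pihomog mdeg d p)]) | d <- index_iota 0 (msize p)].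
  split=> [_ /mapP[d _ ->] /=|].
    split=> [sg|k m _ hk]; first by rewrite ffunE; apply: inS_tofrac.
    rewrite /pairF big_set_ord0 ffunE; have [q [-> hq]] := hk set0.
    rewrite -tofracM.
    by exists (pihomog mdeg d p * q); split=> //; apply/homSM/hq/pihomogP.
  apply/ffunP => sg; rewrite big_map sum_ffunE (set_ord0 sg) hp.
  rewrite {1}(pihomog_partitionE (k := msize p) (mf := mdeg) (p := p)) //.
  by rewrite rmorph_sum /= big_mkord; apply: eq_bigr => d _; rewrite ffunE.
move=> /Ymod_succ[/IH[zs1 [h1 e1]] /IH[zs2 [h2 e2]]].
exists ([seq (z.1, Ycons z.2 0) | z <- zs1] ++ [seq (z.1 - 2, Ycons 0 z.2) | z <- zs2]).
split=> [w|].
  rewrite mem_cat => /orP[] /mapP[z hz ->] /=.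
    have [hYz hz'] := h1 _ hz; split; first by exists z.2, 0; split=> //; apply: Ymod0.
    by apply: shifts_degree_Ycons => //; apply: shifts_degree0.
  have [hYz hz'] := h2 _ hz; split; first by exists 0, z.2; split=> //; apply: Ymod0.
  by apply: shifts_degree_Ycons; [apply: shifts_degree0 | rewrite subrK].
have Ycons_suml : {morph (fun u : M l => Ycons u 0) : u u' / u + u'}.
  by move=> u u'; rewrite YconsD addr0.
have Ycons_sumr : {morph (fun v : M l => Ycons 0 v) : v v' / v + v'}.
  by move=> v v'; rewrite YconsD addr0.
rewrite big_cat !big_map -(big_morph _ Ycons_suml (Ycons0 l)).
rewrite -(big_morph _ Ycons_sumr (Ycons0 l)) /= YconsD addr0 add0r -e1 -e2.
by rewrite Ycons_split.
Qed.

Lemma graded_hom_pairF l n (y : M l) :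
  YM l y -> shifts_degree n y -> is_graded_hom (XM l) n (pairF y).
Proof.
move=> /Ymod_dual[_ hyx] hn; split=> //.
- by move=> m m' _ _; apply: pairFDr.
- by move=> p m _; apply: pairF_scaleM.
Qed.

Lemma in_graded_dual_pairF l (phi : M l -> FT) :
  in_graded_dual (XM l) phi <-> exists y, YM l y /\ forall m, XM l m -> phi m = pairF y m.
Proof.
split=> [[N [deg [phis [hphis hsum]]]]|[y [hy ephi]]].
  have /fin_all_exists[ys hys] : forall j, exists y,
      YM l y /\ forall m, XM l m -> phis j m = pairF y m.
    by move=> j; have [? ? ? _] := hphis j; apply: S_linear_pairF.
  exists (\sum_j ys j); split; first by apply: Ymod_sum => j; case: (hys j).
  move=> m hm; rewrite hsum // pairF_suml.
  by apply: eq_bigr => j _; case: (hys j) => _ ->.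
have [zs [hzs ey]] := Ymod_homog_decomposition hy.
exists (size zs), (fun j => (nth (0, 0) zs j).1), (fun j => pairF (nth (0, 0) zs j).2).
split=> [j|m hm].
  by have [] := hzs _ (mem_nth (0, 0) (ltn_ord j)); apply: graded_hom_pairF.
by rewrite ephi // ey pairF_suml (big_nth (0, 0)) big_mkord.
Qed.

Theorem Ymod_duality l :
  [/\ forall y, YM l y <->
        (forall sg, inQ R (y sg)) /\ (forall m, XM l m -> inS (pairF y m)),
      forall phi, in_graded_dual (XM l) phi <->
        exists y, YM l y /\ forall m, XM l m -> phi m = pairF y m &
      forall y y' : M l, (forall m, XM l m -> pairF y m = pairF y' m) -> y = y'].
Proof.
split=> [y|phi|y y' eyy']; [exact: Ymod_dual | exact: in_graded_dual_pairF |].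
apply/eqP; rewrite -subr_eq0; apply/eqP/pairF_nondegenerate => m hm.
by rewrite pairFBl eyy' ?subrr.
Qed.

End Duality.

Section AffineReflections.
Variables (r : nat) (R : seq 'rV[int]_r) (cor : 'rV[int]_r -> 'rV[int]_r).
Variables (Pi : seq 'rV[int]_r) (g : 'rV[int]_r).
Hypotheses (HRD : is_root_datum R cor) (Hbase : is_base R Pi) (Hg : is_highest_root R Pi g).
Local Notation act := (@lab_act r cor Pi g).
Local Notation root := (@lab_root r Pi g).

Lemma pairingNl (a v : 'rV[int]_r) : pairing (- a) v = - pairing a v.
Proof. by rewrite /pairing -sumrN; apply: eq_bigr => i _; rewrite mxE mulNr. Qed.

Lemma sref_opp al alv n (x : Xh r) : sref al alv n (- x) = - sref al alv n x.
Proof.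
rewrite /sref /= pairingNl; congr (_, _).
  by rewrite scaleNr opprB opprK addrC.
by rewrite mulrN opprK opprB addrC.
Qed.

Lemma lab_act_opp t (x : Xh r) : act t (- x) = - act t x.
Proof. by case: t => [i|] /=; rewrite sref_opp. Qed.

Lemma highest_root_in : g \in R.
Proof. by case: Hg => -[]. Qed.

Lemma simple_root_in (i : 'I_(size Pi)) : Pi`_i \in R.
Proof. by case: Hbase => _ sub _ _; apply/sub/mem_nth. Qed.

Lemma pairing_coroot a : a \in R -> pairing a (cor a) = 2.
Proof. by case: HRD => _ _ h _ _ /h. Qed.

Lemma reflection_in a b : a \in R -> b \in R -> b - pairing b (cor a) *: a \in R.
Proof. by case: HRD => _ _ _ h _ ha hb; apply: h. Qed.

Lemma reflection_self a : a \in R -> a - pairing a (cor a) *: a = - a.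
Proof. by move=> ha; rewrite pairing_coroot // scaler_nat mulr2n opprD addrA subrr sub0r. Qed.

Lemma lab_act_root t : act t (root t) = - root t.
Proof.
case: t => [i|] /=; rewrite /sref /=.
  by rewrite reflection_self ?simple_root_in // pairing_coroot ?simple_root_in.
rewrite pairingNl pairing_coroot ?highest_root_in //.
have -> : - (- g, -1) = (- - g, - -1) :> Xh r by [].
have -> : (-2 : int) = - (1 + 1) by [].
by congr (_, _); rewrite scaleNr opprK scalerDl scale1r addKr opprK.
Qed.

Lemma lab_act_aff t x : is_aff_root R x -> is_aff_root R (act t x).
Proof.
rewrite /is_aff_root; case: t => [i|] /= hx; apply: reflection_in => //.
  exact: simple_root_in.
exact: highest_root_in.
Qed.

Lemma lab_root_aff t : is_aff_root R (root t).
Proof.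
rewrite /is_aff_root; case: t => [i|] /=; first exact: simple_root_in.
by rewrite -reflection_self ?highest_root_in //; apply: reflection_in; apply: highest_root_in.
Qed.

End AffineReflections.

Theorem lemma6p8 (r : nat) (R : seq 'rV[int]_r) (cor : 'rV[int]_r -> 'rV[int]_r)
    (Pi : seq 'rV[int]_r) (g : 'rV[int]_r) (T : idomainType) :
  is_root_datum R cor -> is_reduced R -> is_irreducible R cor ->
  is_base R Pi -> is_highest_root R Pi g ->
  (forall x : Xh r, is_aff_root R x -> embX T x != 0) ->
  (2%:R : T) \is a GRing.unit ->
  forall s : seq (option 'I_(size Pi)),
    (forall y : Md r T (size s),
        YT T cor Pi g s y <->
        ((forall sg, inQ R (y sg)) /\
         (forall m, XT T cor Pi g s m -> inS (pairF y m))))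
    /\
    (forall phi : Md r T (size s) -> {fraction {mpoly T[r.+1]}},
        in_graded_dual (XT T cor Pi g s) phi <->
        exists y, YT T cor Pi g s y /\ forall m, XT T cor Pi g s m -> phi m = pairF y m)
    /\
    (forall y y' : Md r T (size s), YT T cor Pi g s y -> YT T cor Pi g s y' ->
        (forall m, XT T cor Pi g s m -> pairF y m = pairF y' m) -> y = y').
Proof.
move=> HRD _ _ Hbase Hg embX_neq0 two_unit s.
have [Ydual Xdual pairF_inj] := Ymod_duality (nth None s)
  (@lab_act_opp r cor Pi g) (lab_act_root HRD Hbase Hg) (lab_act_aff HRD Hbase Hg)
  (lab_root_aff HRD Hbase Hg) embX_neq0 two_unit (size s).
by split; [|split] => // y y' _ _; apply: pairF_inj.
Qed.
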